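(* For every choice of reward function $Rew()$ and environment function $Env()$, the problem ESCreate (with $Rew()$ and $Env()$ fixed to these choices) is unsolvable: there is no algorithm (Turing machine), regardless of running time or memory, that produces the correct output for every instance.
   Context: Model. Let $X=\{x_1,\dots,x_{|X|}\}$ be Boolean variables and $O$ a finite output set. Software system requirements are a finite set $R$ of pairs $(i,o)$, where $i$ is a truth assignment to $X$ and $o\in O$. Interfaces and components follow the Dana runtime component model: an interface is a set of function prototypes (function name, return type, parameter types) together with a set of typed transfer fields; a component provides one or more interfaces and requires zero or more interfaces, and contains code (in a Dana-like imperative language with assignments, conditionals, loops, arrays, function calls and an output statement; this language can simulate any Turing machine) implementing every function of its provided interfaces; this code may call functions and use transfer fields of its required interfaces. $L_{int}$ and $L_{comp}$ are finite libraries of interfaces and components. Given a base component $c\in L_{comp}$ implementing a function main, a valid component-based software system $S$ based on $c$ (relative to $L_{int},L_{comp}$) is obtained by choosing, for each required interface of $c$, a component of $L_{comp}$ providing it, and recursively for each required interface of every chosen component; separate copies of a component are used for separate required-interface occurrences, and when a component providing several interfaces implements one of them, only a reduced copy containing that interface's code is used. Its component wiring tree has root $c$, vertices the chosen component copies, and arcs (wirings) labelled by the implemented interfaces; no component label may occur twice on a root-to-leaf path. $S$ is working relative to $R$ if for every $(i,o)\in R$, running $S$ on input $i$ outputs $o$. A reward function $Rew()$ maps a system to a positive integer (smaller is better) and an environment function $Env()$ maps a system to a collection of events and metric values; both are computable in time polynomial in the size of the system and $Rew()$ only chooses among working systems. Problem ESCreate: Input: $R$, $L_{int}$, $L_{comp}$,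 base component $c\in L_{comp}$, and $Rew()$, $Env()$. Output: a working system $S$ based on $c$ relative to $L_{int},L_{comp},R$ with the smallest value of $Rew(S)$ among all such working systems, if one exists, and the special symbol $\bot$ otherwise. *)

From Stdlib Require Import ZArith.
From mathcomp Require Import all_boot.

Set Implicit Arguments.
Unset Strict Implicit.
Unset Printing Implicit Defensive.

Inductive ty := TInt | TBool | TArr | TVoid.

Inductive binop := OAdd | OSub | OMul | ODiv | OMod | OLt | OLe | OEq | OAnd | OOr.

(* Field slots: [None] = a transfer field of the interface this (copy of the)
   component implements; [Some r] = a transfer field of its r-th required
   interface. *)
Inductive expr :=
| EInt (z : Z)
| EBool (b : bool)
| EVar (x : nat)
| EInput (k : nat)               (* value of the Boolean input variable x_(k+1) *)
| EField (slot : option nat) (f : nat)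
| EBin (op : binop) (e1 e2 : expr)
| ENot (e : expr)
| ENewArr (len : expr)
| EIndex (a i : expr)
| ELen (a : expr).

Inductive stmt :=
| SSkip
| SAssign (x : nat) (e : expr)
| SAssignIdx (x : nat) (i e : expr)
| SFieldAssign (slot : option nat) (f : nat) (e : expr)
| SSeq (s1 s2 : stmt)
| SIf (c : expr) (s1 s2 : stmt)
| SWhile (c : expr) (s : stmt)
| SCall (x : nat) (slot : nat) (fn : nat) (args : seq expr)
    (* x := <r-th required interface>.fn(args) *)
| SReturn (e : expr)
| SOutput (e : expr).

Record fproto := FProto { fp_name : nat; fp_ret : ty; fp_params : seq ty }.

Record interface := Interface {
  i_name : nat; i_funs : seq fproto; i_fields : seq (nat * ty) }.

Record fundef := FunDef {
  fd_iface : nat; fd_name : nat; fd_params : seq nat; fd_body : stmt }.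

Record component := Component {
  c_label : nat; c_prov : seq nat; c_req : seq nat; c_code : seq fundef }.

Definition main_fn : nat := 0.

(* A node is a copy of a component, together with the interface it implements
   for its parent ([None] for the root); the children are the components wired
   to its required interfaces, in order. *)
Inductive system := SNode (k : component) (impl : option nat) (ch : seq system).

Fixpoint mem_seq (T : Type) (x : T) (s : seq T) : Prop :=
  match s with [::] => False | y :: s' => y = x \/ mem_seq x s' end.

Definition dummy_comp := Component 0 [::] [::] [::].
Definition dummy_sys := SNode dummy_comp None [::].

(* [valid_sub Lcomp path p sys]: sys is a valid wiring (sub)tree whose root
   implements interface [p], where [path] lists the labels of the ancestors. *)
Inductive valid_sub (Lcomp : seq component) : seq nat -> option nat -> system -> Prop :=
| VNode path p k ch :
    mem_seq k Lcomp ->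
    (forall i, p = Some i -> mem_seq i (c_prov k)) ->
    c_label k \notin path ->
    size ch = size (c_req k) ->
    (forall j, j < size ch ->
       valid_sub Lcomp (c_label k :: path) (Some (nth 0 (c_req k) j)) (nth dummy_sys ch j)) ->
    valid_sub Lcomp path p (SNode k p ch).

Definition valid_system (Lcomp : seq component) (c : component) (sys : system) : Prop :=
  exists ch, sys = SNode c None ch /\ valid_sub Lcomp [::] None sys.

Inductive value := VInt (z : Z) | VBool (b : bool) | VArr (s : seq Z) | VVoid.

Definition locals := nat -> option value.
(* transfer-field store, indexed by the address (path of child indices from
   the root) of the node implementing the interface, and the field name *)
Definition store := seq nat -> nat -> option value.

Definition empty_locals : locals := fun _ => None.
Definition empty_store : store := fun _ _ => None.

Definition upd_loc (l : locals) (x : nat) (v : value) : locals :=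
  fun y => if y == x then Some v else l y.
Definition upd_store (st : store) (a : seq nat) (f : nat) (v : value) : store :=
  fun a' f' => if (a' == a) && (f' == f) then Some v else st a' f'.

Definition default_val (t : ty) : value :=
  match t with TInt => VInt 0 | TBool => VBool false | TArr => VArr [::] | TVoid => VVoid end.

Definition find_iface (Lint : seq interface) (n : nat) : option interface :=
  ohead [seq I <- Lint | i_name I == n].

Definition field_type (Lint : seq interface) (n f : nat) : option ty :=
  match find_iface Lint n with
  | Some Ifc => option_map snd (ohead [seq p <- i_fields Ifc | p.1 == f])
  | None => None
  end.

Definition resolve_slot (nd : system) (addr : seq nat) (slot : option nat)
  : option (seq nat * nat) :=
  match nd with SNode k p _ =>
    match slot with
    | None => match p with Some i => Some (addr, i) | None => None end
    | Some r => if r < size (c_req k) then Some (rcons addr r, nth 0 (c_req k) r) else None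
    end
  end.

Definition eval_binop (op : binop) (v1 v2 : value) : option value :=
  match op, v1, v2 with
  | OAdd, VInt a, VInt b => Some (VInt (a + b)%Z)
  | OSub, VInt a, VInt b => Some (VInt (a - b)%Z)
  | OMul, VInt a, VInt b => Some (VInt (a * b)%Z)
  | ODiv, VInt a, VInt b => if Z.eqb b 0 then None else Some (VInt (Z.div a b))
  | OMod, VInt a, VInt b => if Z.eqb b 0 then None else Some (VInt (Z.modulo a b))
  | OLt, VInt a, VInt b => Some (VBool (Z.ltb a b))
  | OLe, VInt a, VInt b => Some (VBool (Z.leb a b))
  | OEq, VInt a, VInt b => Some (VBool (Z.eqb a b))
  | OEq, VBool a, VBool b => Some (VBool (a == b))
  | OAnd, VBool a, VBool b => Some (VBool (a && b))
  | OOr, VBool a, VBool b => Some (VBool (a || b))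
  | _, _, _ => None
  end.

Definition in_range (i : Z) (s : seq Z) : bool :=
  Z.leb 0 i && (Z.to_nat i < size s).

Fixpoint eval_expr (Lint : seq interface) (inp : seq bool) (nd : system)
  (addr : seq nat) (loc : locals) (st : store) (e : expr) : option value :=
  let ev := eval_expr Lint inp nd addr loc st in
  match e with
  | EInt z => Some (VInt z)
  | EBool b => Some (VBool b)
  | EVar x => loc x
  | EInput k => if k < size inp then Some (VBool (nth false inp k)) else None
  | EField slot f =>
      match resolve_slot nd addr slot with
      | Some (a, i) =>
          match field_type Lint i f with
          | Some t => match st a f with Some v => Some v | None => Some (default_val t) end
          | None => None
          end
      | None => None
      end
  | EBin op e1 e2 =>
      match ev e1, ev e2 with Some v1, Some v2 => eval_binop op v1 v2 | _, _ => None end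
  | ENot e1 => match ev e1 with Some (VBool b) => Some (VBool (~~ b)) | _ => None end
  | ENewArr e1 =>
      match ev e1 with
      | Some (VInt n) => if Z.leb 0 n then Some (VArr (nseq (Z.to_nat n) 0%Z)) else None
      | _ => None end
  | EIndex a i =>
      match ev a, ev i with
      | Some (VArr s), Some (VInt j) =>
          if in_range j s then Some (VInt (nth 0%Z s (Z.to_nat j))) else None
      | _, _ => None end
  | ELen a => match ev a with Some (VArr s) => Some (VInt (Z.of_nat (size s))) | _ => None end
  end.

Fixpoint eval_args (Lint : seq interface) (inp : seq bool) (nd : system)
  (addr : seq nat) (loc : locals) (st : store) (es : seq expr) : option (seq value) :=
  match es with
  | [::] => Some [::]
  | e :: es' =>
      match eval_expr Lint inp nd addr loc st e, eval_args Lint inp nd addr loc st es' with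
      | Some v, Some vs => Some (v :: vs)
      | _, _ => None
      end
  end.

Fixpoint bind_params (xs : seq nat) (vs : seq value) : locals :=
  match xs, vs with
  | x :: xs', v :: vs' => upd_loc (bind_params xs' vs') x v
  | _, _ => empty_locals
  end.

(* Code of (the reduced copy) [nd] for function [fn]: only the code of the
   interface it implements is available (all code for the root). *)
Definition lookup_code (nd : system) (fn : nat) : option fundef :=
  match nd with SNode k p _ =>
    ohead [seq fd <- c_code k | (fd_name fd == fn) &&
             (if p is Some i then fd_iface fd == i else true)]
  end.

Definition lookup_call (Lint : seq interface) (nd : system) (iname fn n : nat)
  : option fundef :=
  match find_iface Lint iname with
  | Some Ifc =>
      if has (fun pr => (fp_name pr == fn) && (size (fp_params pr) == n)) (i_funs Ifc) then
        match lookup_code nd fn with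
        | Some fd => if size (fd_params fd) == n then Some fd else None
        | None => None
        end
      else None
  | None => None
  end.

Inductive outcome :=
| ONormal (loc : locals) (st : store)
| OReturn (v : value) (st : store)
| OOutput (z : Z)        (* the output statement was executed; the run ends *)
| OStuck
| OTimeout.

Definition upd_idx (s : seq Z) (j : Z) (z : Z) : seq Z :=
  set_nth 0%Z s (Z.to_nat j) z.

Fixpoint exec (fuel : nat) (Lint : seq interface) (inp : seq bool) (nd : system)
  (addr : seq nat) (loc : locals) (st : store) (s : stmt) : outcome :=
  match fuel with
  | 0 => OTimeout
  | fuel'.+1 =>
    let ev := eval_expr Lint inp nd addr loc st in
    match s with
    | SSkip => ONormal loc st
    | SAssign x e => match ev e with Some v => ONormal (upd_loc loc x v) st | None => OStuck end
    | SAssignIdx x i e =>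
        match loc x, ev i, ev e with
        | Some (VArr a), Some (VInt j), Some (VInt z) =>
            if in_range j a then ONormal (upd_loc loc x (VArr (upd_idx a j z))) st else OStuck
        | _, _, _ => OStuck
        end
    | SFieldAssign slot f e =>
        match resolve_slot nd addr slot, ev e with
        | Some (a, i), Some v =>
            match field_type Lint i f with
            | Some _ => ONormal loc (upd_store st a f v)
            | None => OStuck
            end
        | _, _ => OStuck
        end
    | SSeq s1 s2 =>
        match exec fuel' Lint inp nd addr loc st s1 with
        | ONormal loc' st' => exec fuel' Lint inp nd addr loc' st' s2
        | o => o
        end
    | SIf c s1 s2 =>
        match ev c with
        | Some (VBool b) => exec fuel' Lint inp nd addr loc st (if b then s1 else s2)
        | _ => OStuck
        end
    | SWhile c b =>
        match ev c with
        | Some (VBool true) => exec fuel' Lint inp nd addr loc st (SSeq b (SWhile c b))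
        | Some (VBool false) => ONormal loc st
        | _ => OStuck
        end
    | SCall x r fn args =>
        match nd with SNode k _ ch =>
          if r < size ch then
            let child := nth dummy_sys ch r in
            match eval_args Lint inp nd addr loc st args with
            | Some vs =>
                match lookup_call Lint child (nth 0 (c_req k) r) fn (size vs) with
                | Some fd =>
                    match exec fuel' Lint inp child (rcons addr r)
                            (bind_params (fd_params fd) vs) st (fd_body fd) with
                    | OReturn v st' => ONormal (upd_loc loc x v) st'
                    | ONormal _ st' => ONormal (upd_loc loc x VVoid) st'
                    | OOutput z => OOutput z
                    | OStuck => OStuck
                    | OTimeout => OTimeout
                    end
                | None => OStuck
                end
            | None => OStuck
            end
          else OStuck
        end
    | SReturn e => match ev e with Some v => OReturn v st | None => OStuck end
    | SOutput e => match ev e with Some (VInt z) => OOutput z | _ => OStuck end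
    end
  end.

Definition run (fuel : nat) (Lint : seq interface) (inp : seq bool) (sys : system) : outcome :=
  match lookup_code sys main_fn with
  | Some fd => exec fuel Lint inp sys [::] empty_locals empty_store (fd_body fd)
  | None => OStuck
  end.

Definition outputs (Lint : seq interface) (sys : system) (i : seq bool) (o : Z) : Prop :=
  exists fuel, run fuel Lint i sys = OOutput o.

(* requirements: pairs (truth assignment to x_1..x_n, output) *)
Definition requirements := seq (seq bool * Z).

Definition working (Lint : seq interface) (R : requirements) (sys : system) : Prop :=
  forall p, mem_seq p R -> outputs Lint sys p.1 p.2.

Record instance := Instance {
  inst_nvars : nat;
  inst_R : requirements;
  inst_Lint : seq interface;
  inst_Lcomp : seq component;
  inst_c : component }.

Definition wf_libs (Lint : seq interface) (Lcomp : seq component) : Prop :=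
  (forall I1 I2, mem_seq I1 Lint -> mem_seq I2 Lint -> i_name I1 = i_name I2 -> I1 = I2) /\
  (forall k, mem_seq k Lcomp -> forall n, mem_seq n (c_prov k ++ c_req k) ->
     exists I, mem_seq I Lint /\ i_name I = n) /\
  (forall k, mem_seq k Lcomp -> forall I, mem_seq I Lint -> mem_seq (i_name I) (c_prov k) ->
     forall pr, mem_seq pr (i_funs I) ->
       exists fd, mem_seq fd (c_code k) /\ fd_iface fd = i_name I /\
         fd_name fd = fp_name pr /\ size (fd_params fd) = size (fp_params pr)).

Definition valid_instance (I : instance) : Prop :=
  (forall p, mem_seq p (inst_R I) -> size p.1 = inst_nvars I) /\
  wf_libs (inst_Lint I) (inst_Lcomp I) /\
  mem_seq (inst_c I) (inst_Lcomp I) /\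
  (exists fd, mem_seq fd (c_code (inst_c I)) /\ fd_name fd = main_fn).

(* The correct outputs of ESCreate ([None] stands for the symbol ⊥). *)
Definition ESCreate_correct (Rew : system -> nat) (I : instance) (a : option system) : Prop :=
  let ok sys := valid_system (inst_Lcomp I) (inst_c I) sys /\ working (inst_Lint I) (inst_R I) sys in
  match a with
  | None => ~ exists sys, ok sys
  | Some sys => ok sys /\ forall sys', ok sys' -> Rew sys <= Rew sys'
  end.

Fixpoint enc_pos (p : positive) : seq bool :=
  match p with
  | xH => [:: false]
  | xO q => [:: true; false] ++ enc_pos q
  | xI q => [:: true; true] ++ enc_pos q
  end.
Definition enc_N (n : N) : seq bool :=
  match n with N0 => [:: false] | Npos p => true :: enc_pos p end.
Definition enc_nat (n : nat) : seq bool := enc_N (N.of_nat n).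
Definition enc_Z (z : Z) : seq bool :=
  match z with
  | Z0 => [:: false; false]
  | Zpos p => true :: enc_pos p
  | Zneg p => [:: false; true] ++ enc_pos p
  end.
Definition enc_bool (b : bool) : seq bool := [:: b].
Fixpoint enc_seq (T : Type) (f : T -> seq bool) (s : seq T) : seq bool :=
  match s with [::] => [:: false] | x :: s' => true :: f x ++ enc_seq f s' end.
Definition enc_option (T : Type) (f : T -> seq bool) (o : option T) : seq bool :=
  match o with None => [:: false] | Some x => true :: f x end.
Definition enc_pair (A B : Type) (f : A -> seq bool) (g : B -> seq bool) (p : A * B) :=
  f p.1 ++ g p.2.

Definition enc_ty (t : ty) : seq bool :=
  enc_nat (match t with TInt => 0 | TBool => 1 | TArr => 2 | TVoid => 3 end).
Definition enc_binop (o : binop) : seq bool :=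
  enc_nat (match o with OAdd => 0 | OSub => 1 | OMul => 2 | ODiv => 3 | OMod => 4
                      | OLt => 5 | OLe => 6 | OEq => 7 | OAnd => 8 | OOr => 9 end).

Fixpoint enc_expr (e : expr) : seq bool :=
  match e with
  | EInt z => enc_nat 0 ++ enc_Z z
  | EBool b => enc_nat 1 ++ enc_bool b
  | EVar x => enc_nat 2 ++ enc_nat x
  | EInput k => enc_nat 3 ++ enc_nat k
  | EField s f => enc_nat 4 ++ enc_option enc_nat s ++ enc_nat f
  | EBin o e1 e2 => enc_nat 5 ++ enc_binop o ++ enc_expr e1 ++ enc_expr e2
  | ENot e1 => enc_nat 6 ++ enc_expr e1
  | ENewArr e1 => enc_nat 7 ++ enc_expr e1
  | EIndex a i => enc_nat 8 ++ enc_expr a ++ enc_expr i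
  | ELen a => enc_nat 9 ++ enc_expr a
  end.

Fixpoint enc_stmt (s : stmt) : seq bool :=
  match s with
  | SSkip => enc_nat 0
  | SAssign x e => enc_nat 1 ++ enc_nat x ++ enc_expr e
  | SAssignIdx x i e => enc_nat 2 ++ enc_nat x ++ enc_expr i ++ enc_expr e
  | SFieldAssign sl f e => enc_nat 3 ++ enc_option enc_nat sl ++ enc_nat f ++ enc_expr e
  | SSeq s1 s2 => enc_nat 4 ++ enc_stmt s1 ++ enc_stmt s2
  | SIf c s1 s2 => enc_nat 5 ++ enc_expr c ++ enc_stmt s1 ++ enc_stmt s2
  | SWhile c b => enc_nat 6 ++ enc_expr c ++ enc_stmt b
  | SCall x r fn args => enc_nat 7 ++ enc_nat x ++ enc_nat r ++ enc_nat fn ++ enc_seq enc_expr args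
  | SReturn e => enc_nat 8 ++ enc_expr e
  | SOutput e => enc_nat 9 ++ enc_expr e
  end.

Definition enc_fproto (p : fproto) : seq bool :=
  enc_nat (fp_name p) ++ enc_ty (fp_ret p) ++ enc_seq enc_ty (fp_params p).
Definition enc_interface (I : interface) : seq bool :=
  enc_nat (i_name I) ++ enc_seq enc_fproto (i_funs I) ++
  enc_seq (enc_pair enc_nat enc_ty) (i_fields I).
Definition enc_fundef (fd : fundef) : seq bool :=
  enc_nat (fd_iface fd) ++ enc_nat (fd_name fd) ++ enc_seq enc_nat (fd_params fd) ++
  enc_stmt (fd_body fd).
Definition enc_component (k : component) : seq bool :=
  enc_nat (c_label k) ++ enc_seq enc_nat (c_prov k) ++ enc_seq enc_nat (c_req k) ++
  enc_seq enc_fundef (c_code k).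

Fixpoint enc_system (sys : system) : seq bool :=
  match sys with
  | SNode k p ch =>
      enc_component k ++ enc_option enc_nat p ++
      (fix encs (l : seq system) : seq bool :=
         match l with [::] => [:: false] | x :: l' => true :: enc_system x ++ encs l' end) ch
  end.

Definition enc_instance (I : instance) : seq bool :=
  enc_nat (inst_nvars I) ++
  enc_seq (enc_pair (enc_seq enc_bool) enc_Z) (inst_R I) ++
  enc_seq enc_interface (inst_Lint I) ++
  enc_seq enc_component (inst_Lcomp I) ++
  enc_component (inst_c I).

Definition enc_answer (a : option system) : seq bool := enc_option enc_system a.

Inductive move := MLeft | MRight | MStay.

(* A deterministic Turing machine with a two-way infinite tape, states
   0..tm_nst (start state 0) and tape alphabet 0..tm_nsym+2, where 0 is the
   blank and 1, 2 encode the bits false, true.  [tm_delta q a = None] means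
   the machine halts. *)
Record TM := mkTM {
  tm_nst : nat;
  tm_nsym : nat;
  tm_delta : 'I_tm_nst.+1 -> 'I_tm_nsym.+3 ->
             option ('I_tm_nst.+1 * 'I_tm_nsym.+3 * move) }.

Definition tsym (M : TM) := 'I_(tm_nsym M).+3.
Definition tstate (M : TM) := 'I_(tm_nst M).+1.
Definition blank (M : TM) : tsym M := ord0.
Definition bitsym (M : TM) (b : bool) : tsym M := inord (if b then 2 else 1).

Record config (M : TM) := Config {
  cstate : tstate M;
  cleft : seq (tsym M);    (* cells left of the head, nearest first *)
  chead : tsym M;
  cright : seq (tsym M) }. (* cells right of the head, nearest first *)

Definition step (M : TM) (c : config M) : option (config M) :=
  match tm_delta (cstate c) (chead c) with
  | None => None
  | Some (q, a, m) =>
      Some (match m with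
            | MStay => Config q (cleft c) a (cright c)
            | MLeft => match cleft c with
                       | [::] => Config q [::] (blank M) (a :: cright c)
                       | x :: l => Config q l x (a :: cright c)
                       end
            | MRight => match cright c with
                        | [::] => Config q (a :: cleft c) (blank M) [::]
                        | x :: r => Config q (a :: cleft c) x r
                        end
            end)
  end.

(* [run_steps t c = Some c'] iff started in c the machine halts in c'
   after at most t steps *)
Fixpoint run_steps (M : TM) (t : nat) (c : config M) : option (config M) :=
  match step c with
  | None => Some c
  | Some c' => match t with 0 => None | t'.+1 => run_steps t' c' end
  end.

Definition init_config (M : TM) (w : seq bool) : config M :=
  match w with
  | [::] => Config (@ord0 (tm_nst M)) [::] (blank M) [::]
  | b :: w' => Config (@ord0 (tm_nst M)) [::] (bitsym M b) (map (bitsym M) w')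
  end.

(* output: the maximal string of bit symbols starting at the head *)
Fixpoint read_bits (M : TM) (s : seq (tsym M)) : seq bool :=
  match s with
  | [::] => [::]
  | a :: s' => if val a == 1 then false :: read_bits s'
               else if val a == 2 then true :: read_bits s' else [::]
  end.
Definition tm_output (M : TM) (c : config M) : seq bool := read_bits (chead c :: cright c).

Definition tm_computes (M : TM) (w w' : seq bool) : Prop :=
  exists t c, run_steps t (init_config M w) = Some c /\ tm_output c = w'.

Definition poly_time_computable (A B : Type) (encA : A -> seq bool)
  (encB : B -> seq bool) (f : A -> B) : Prop :=
  exists (M : TM) (d : nat), forall x, exists c,
    run_steps (d * (size (encA x)).+1 ^ d) (init_config M (encA x)) = Some c /\
    tm_output c = encB (f x).

Definition solves_ESCreate (Rew : system -> nat) (M : TM) : Prop :=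
  forall I, valid_instance I ->
    exists a, ESCreate_correct Rew I a /\ tm_computes M (enc_instance I) (enc_answer a).

From Stdlib Require Import ZArith Lia.
From mathcomp Require Import all_boot.

Set Implicit Arguments.
Unset Strict Implicit.
Unset Printing Implicit Defensive.

(* Diagonalisation, in the style of Kleene's recursion theorem.  Given a
   machine M, build a one-component system whose main program P knows its own
   text: it stores the numeral code of the rest of itself as a constant and
   recomputes from it the encoding of the ESCreate instance "P is the only
   component; on the empty input, output 0".  P then simulates M on that
   encoding, keeping each half of the tape as a base-K numeral, and outputs 1
   if M answers with a system and 0 if M answers ⊥.  The only valid system of
   the instance is P itself, so if M answers with a system it is not working,
   and if M answers ⊥ the system P is working: M is wrong either way. *)

Lemma exec_fuel_mono f Lint inp nd addr loc st s o :
  exec f Lint inp nd addr loc st s = o -> o <> OTimeout ->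
  forall f', f <= f' -> exec f' Lint inp nd addr loc st s = o.
Proof.
elim: f Lint inp nd addr loc st s o => [|f IH] Lint inp nd addr loc st s o /=; first by move=> <-.
move=> E NT [|f'] //= Hf.
have IHf := fun nd' addr' loc' st' s' => IH Lint inp nd' addr' loc' st' s' _ erefl.
case: s E => [| x e | x i e | sl fl e | s1 s2 | c s1 s2 | c b | x r fn args | e | e] //= E.
- case E1: (exec f Lint inp nd addr loc st s1) E => [l1 st1|v st1|z||] E;
    rewrite (IHf _ _ _ _ s1) ?E1 //; [exact: IH E NT _ Hf | by move: E NT => <-].
- case: (eval_expr Lint inp nd addr loc st c) E => [[]|] // ? E; exact: IH E NT _ Hf.
- case: (eval_expr Lint inp nd addr loc st c) E => [[? | [] | ? | ] | ] //= E; exact: IH E NT _ Hf.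
- case: nd E IHf => k p ch E IHf; case: (r < size ch) E => //.
  case: (eval_args _ _ _ _ _ _ args) => [vs|] //.
  case: (lookup_call _ _ _ _ _) => [fd|] //.
  case E1: (exec f _ _ _ _ _ _ (fd_body fd)) => [l1 st1|v st1|z||] E;
    rewrite (IHf _ _ _ _ (fd_body fd)) ?E1 //; by move: E NT => <-.
Qed.

Section BigStep.
Variables (Lint : seq interface) (inp : seq bool) (nd : system) (addr : seq nat).

Definition runs_to (s : stmt) (l : locals) (st : store) (o : outcome) : Prop :=
  o <> OTimeout /\ exists f, exec f Lint inp nd addr l st s = o.

Definition ev (l : locals) (st : store) (e : expr) : option value :=
  eval_expr Lint inp nd addr l st e.

Lemma runs_to_det s l st o1 o2 : runs_to s l st o1 -> runs_to s l st o2 -> o1 = o2.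
Proof.
move=> [N1 [f1 E1]] [N2 [f2 E2]].
by rewrite -(exec_fuel_mono E1 N1 (leq_maxl f1 f2)) -(exec_fuel_mono E2 N2 (leq_maxr f1 f2)).
Qed.

Lemma runs_to_assign x e l st v : ev l st e = Some v ->
  runs_to (SAssign x e) l st (ONormal (upd_loc l x v) st).
Proof. by move=> Ev; split=> //; exists 1; rewrite /= -/(ev l st e) Ev. Qed.

Lemma runs_to_skip l st : runs_to SSkip l st (ONormal l st).
Proof. by split=> //; exists 1. Qed.

Lemma runs_to_seq s1 s2 l st l1 st1 o :
  runs_to s1 l st (ONormal l1 st1) -> runs_to s2 l1 st1 o -> runs_to (SSeq s1 s2) l st o.
Proof.
move=> [_ [f1 E1]] [N [f2 E2]]; split=> //; exists (maxn f1 f2).+1 => /=.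
rewrite (exec_fuel_mono E1 ltac:(discriminate) (leq_maxl f1 f2)).
exact: (exec_fuel_mono E2 N (leq_maxr f1 f2)).
Qed.

Lemma runs_to_seq_exists s1 s2 l st l1 (Q : locals -> Prop) :
  runs_to s1 l st (ONormal l1 st) ->
  (exists l2, runs_to s2 l1 st (ONormal l2 st) /\ Q l2) ->
  exists l2, runs_to (SSeq s1 s2) l st (ONormal l2 st) /\ Q l2.
Proof. by move=> H1 [l2 [H2 Q2]]; exists l2; split=> //; apply: runs_to_seq H2. Qed.

Lemma runs_to_seq_output s1 s2 l st z :
  runs_to s1 l st (OOutput z) -> runs_to (SSeq s1 s2) l st (OOutput z).
Proof. by move=> [_ [f E]]; split=> //; exists f.+1; rewrite /= E. Qed.

Lemma runs_to_if c s1 s2 l st b o : ev l st c = Some (VBool b) ->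
  runs_to (if b then s1 else s2) l st o -> runs_to (SIf c s1 s2) l st o.
Proof. by move=> Ec [N [f E]]; split=> //; exists f.+1; rewrite /= -/(ev l st c) Ec. Qed.

Lemma runs_to_output e l st z : ev l st e = Some (VInt z) ->
  runs_to (SOutput e) l st (OOutput z).
Proof. by move=> Ev; split=> //; exists 1; rewrite /= -/(ev l st e) Ev. Qed.

Lemma runs_to_while_false c s l st : ev l st c = Some (VBool false) ->
  runs_to (SWhile c s) l st (ONormal l st).
Proof. by move=> Ec; split=> //; exists 1; rewrite /= -/(ev l st c) Ec. Qed.

Lemma runs_to_while_true c s l st l1 st1 o : ev l st c = Some (VBool true) ->
  runs_to s l st (ONormal l1 st1) -> runs_to (SWhile c s) l1 st1 o ->
  runs_to (SWhile c s) l st o.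
Proof.
move=> Ec Hs Hw; have [N [f E]] := runs_to_seq Hs Hw.
by split=> //; exists f.+1; rewrite /= -/(ev l st c) Ec.
Qed.

Lemma runs_to_while c s st (P : nat -> locals -> Prop) (Q : locals -> Prop) :
  (forall n l, P n l ->
     (ev l st c = Some (VBool false) /\ Q l) \/
     (ev l st c = Some (VBool true) /\
      exists m l', m < n /\ runs_to s l st (ONormal l' st) /\ P m l')) ->
  forall n l, P n l -> exists l', runs_to (SWhile c s) l st (ONormal l' st) /\ Q l'.
Proof.
move=> step n; elim: n {-2}n (leqnn n) => [|n IH] m Hm l Hp.
- case: (step _ _ Hp) => [[Ec Hq]|[_ [k [_ [Hk _]]]]].
    by exists l; split=> //; apply: runs_to_while_false.
  by move: Hk Hm; case: m {Hp}.
- case: (step _ _ Hp) => [[Ec Hq]|[Ec [k [l' [Hk [Hs Hp']]]]]].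
    by exists l; split=> //; apply: runs_to_while_false.
  have [l'' [E Q'']] := IH k (leq_trans Hk Hm) l' Hp'.
  by exists l''; split=> //; apply: runs_to_while_true Hs E.
Qed.

End BigStep.

Section Numerals.
Variable M : TM.

(* Little-endian numerals in base [radix M] with nonzero digits: bit [b] is the
   digit [val (bitsym M b) + 1] and tape symbol [x] the digit [val x + 1].  So
   [0] codes only the empty string, and the length of a bit string can be read
   off its code. *)
Definition radix : Z := (Z.of_nat (tm_nsym M) + 4)%Z.

Definition bits_code (s : seq bool) : Z :=
  foldr (fun b acc => (if b then 3 else 2) + radix * acc)%Z 0%Z s.
Definition bits_scale (s : seq bool) : Z := (radix ^ Z.of_nat (size s))%Z.
Definition tape_code (s : seq (tsym M)) : Z :=
  foldr (fun x acc => Z.of_nat (val x) + 1 + radix * acc)%Z 0%Z s.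

Lemma radix_ge4 : (4 <= radix)%Z. Proof. rewrite /radix; lia. Qed.

Lemma radix_eqb0 : Z.eqb radix 0 = false.
Proof. by apply/Z.eqb_neq; have := radix_ge4; lia. Qed.

Lemma bits_code_cons b s : bits_code (b :: s) = ((if b then 3 else 2) + radix * bits_code s)%Z.
Proof. by []. Qed.

Lemma bits_scale_cons b s : bits_scale (b :: s) = (radix * bits_scale s)%Z.
Proof. by rewrite /bits_scale [size _]/= Nat2Z.inj_succ Z.pow_succ_r; lia. Qed.

Lemma bits_code_cat s t : bits_code (s ++ t) = (bits_code s + bits_scale s * bits_code t)%Z.
Proof.
elim: s => [|b s IH]; first by rewrite /bits_scale /=; case: (bits_code t).
by rewrite cat_cons !bits_code_cons bits_scale_cons IH; ring.
Qed.

Lemma bits_scale_cat s t : bits_scale (s ++ t) = (bits_scale s * bits_scale t)%Z.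
Proof. by rewrite /bits_scale size_cat Nat2Z.inj_add Z.pow_add_r; lia. Qed.

Lemma bits_code_ge0 s : (0 <= bits_code s)%Z.
Proof. by elim: s => //= b s IH; have := radix_ge4; case: b; nia. Qed.

Lemma bits_code_cons_gt0 b s : (0 < bits_code (b :: s))%Z.
Proof. by rewrite /=; have := @bits_code_ge0 s; have := radix_ge4; case: b; nia. Qed.

Lemma bits_code_div b s : (bits_code (b :: s) / radix)%Z = bits_code s.
Proof.
symmetry; apply: (Z.div_unique_pos _ _ _ (if b then 3 else 2)%Z); last by rewrite /=; lia.
by have := radix_ge4; case: b; lia.
Qed.

Lemma val_bitsym b : val (bitsym M b) = if b then 2 else 1.
Proof. by case: b; exact: inordK. Qed.

Lemma tape_code_bits s : tape_code (map (bitsym M) s) = bits_code s.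
Proof. by elim: s => //= b s ->; rewrite val_bitsym; case: b. Qed.

Lemma tsym_digit (x : tsym M) : (0 <= Z.of_nat (val x) /\ Z.of_nat (val x) + 1 < radix)%Z.
Proof.
have : (nat_of_ord x < (tm_nsym M).+3)%coq_nat by apply/ltP.
by change (val x) with (nat_of_ord x); rewrite /radix; lia.
Qed.

Lemma tape_code_cons x s : tape_code (x :: s) = (Z.of_nat (val x) + 1 + radix * tape_code s)%Z.
Proof. by []. Qed.

Lemma tape_code_ge0 s : (0 <= tape_code s)%Z.
Proof. by elim: s => //= x s IH; have := @tsym_digit x; have := radix_ge4; nia. Qed.

Lemma tape_code_cons_eqb0 x s : Z.eqb (tape_code (x :: s)) 0 = false.
Proof.
apply/Z.eqb_neq; rewrite tape_code_cons.
by have := @tape_code_ge0 s; have := @tsym_digit x; have := radix_ge4; nia.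
Qed.

Lemma tape_code_div x s : (tape_code (x :: s) / radix)%Z = tape_code s.
Proof.
symmetry; apply: (Z.div_unique_pos _ _ _ (Z.of_nat (val x) + 1)); last by rewrite /=; lia.
by have := @tsym_digit x; lia.
Qed.

Lemma tape_code_head x s : (tape_code (x :: s) mod radix - 1)%Z = Z.of_nat (val x).
Proof.
rewrite -(Z.mod_unique_pos _ _ (tape_code s) (Z.of_nat (val x) + 1)); first lia.
  by have := @tsym_digit x; lia.
by rewrite tape_code_cons; lia.
Qed.

End Numerals.

Arguments bits_code : simpl never.
Arguments bits_scale : simpl never.
Arguments tape_code : simpl never.

Definition v_state := 1.
Definition v_head := 2.
Definition v_left := 3.
Definition v_right := 4.
Definition v_running := 5.
Definition v_self := 6.
Definition v_inst := 7.
Definition v_inst_scale := 8.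
Definition v_num := 9.
Definition v_pow := 10.
Definition v_prog := 11.
Definition v_prog_scale := 12.
Definition v_bit := 13.

Lemma upd_locE l x v y : upd_loc l x v y = if y == x then Some v else l y.
Proof. by []. Qed.

Definition agree_off (l l0 : locals) (xs : seq nat) := forall y, y \notin xs -> l y = l0 y.

Lemma agree_off_upd l l0 xs x v : agree_off l l0 xs -> x \in xs -> agree_off (upd_loc l x v) l0 xs.
Proof.
move=> agr x_in y y_nin; rewrite upd_locE; case: eqP => [eq_y|_]; last exact: agr.
by rewrite eq_y x_in in y_nin.
Qed.

Lemma agree_off_trans l1 l2 l3 xs :
  agree_off l1 l2 xs -> agree_off l2 l3 xs -> agree_off l1 l3 xs.
Proof. by move=> agr12 agr23 y y_nin; rewrite agr12 ?agr23. Qed.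

Lemma Z_of_nat_eqb n m : Z.eqb (Z.of_nat n) (Z.of_nat m) = (n == m).
Proof. by apply/idP/eqP => [/Z.eqb_eq /Nat2Z.inj | ->] //; exact: Z.eqb_refl. Qed.

Lemma run_steps_unfold (M : TM) t (c : config M) : run_steps t c =
  match step c with
  | None => Some c
  | Some c' => if t is t'.+1 then run_steps t' c' else None
  end.
Proof. by case: t. Qed.

Section Simulator.
Variable M : TM.
Variables (Lint : seq interface) (inp : seq bool) (nd : system) (addr : seq nat).
Local Notation runs_to := (runs_to Lint inp nd addr).
Local Notation ev := (ev Lint inp nd addr).
Local Notation K := (radix M).

(* The least digit of each half-tape code is the cell next to the head. *)
Definition codes_config (l : locals) (c : config M) (running : bool) : Prop :=
  [/\ l v_state = Some (VInt (Z.of_nat (val (cstate c)))),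
      l v_head = Some (VInt (Z.of_nat (val (chead c)))),
      l v_left = Some (VInt (tape_code (cleft c))),
      l v_right = Some (VInt (tape_code (cright c))) &
      l v_running = Some (VBool running)].

(* Write the digit of [a] and move the head towards the half-tape [src]: push
   it onto [dst] and pop [src], reading a blank if [src] is empty. *)
Definition shift_head (src dst : nat) (a : Z) : stmt :=
  SSeq (SAssign dst (EBin OAdd (EInt (a + 1)) (EBin OMul (EInt K) (EVar dst))))
  (SIf (EBin OEq (EVar src) (EInt 0)) (SAssign v_head (EInt 0))
     (SSeq (SAssign v_head (EBin OSub (EBin OMod (EVar src) (EInt K)) (EInt 1)))
           (SAssign src (EBin ODiv (EVar src) (EInt K))))).

Definition write_move (a : Z) (m : move) : stmt :=
  match m with
  | MStay => SAssign v_head (EInt a)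
  | MLeft => shift_head v_left v_right a
  | MRight => shift_head v_right v_left a
  end.

Definition transition (d : option (tstate M * tsym M * move)) : stmt :=
  match d with
  | None => SAssign v_running (EBool false)
  | Some (q, a, m) =>
      SSeq (SAssign v_state (EInt (Z.of_nat (val q)))) (write_move (Z.of_nat (val a)) m)
  end.

Definition dispatch (ps : seq (tstate M * tsym M)) : stmt :=
  foldr (fun qa rest =>
    SIf (EBin OAnd (EBin OEq (EVar v_state) (EInt (Z.of_nat (val qa.1))))
                   (EBin OEq (EVar v_head) (EInt (Z.of_nat (val qa.2)))))
        (transition (tm_delta qa.1 qa.2)) rest) SSkip ps.

Definition state_symbol_pairs : seq (tstate M * tsym M) :=
  [seq (q, a) | q <- enum 'I_(tm_nst M).+1, a <- enum 'I_(tm_nsym M).+3].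

Definition simulate : stmt := SWhile (EVar v_running) (dispatch state_symbol_pairs).

Lemma dispatch_runs ps l st o q a : (q, a) \in ps ->
  l v_state = Some (VInt (Z.of_nat (val q))) -> l v_head = Some (VInt (Z.of_nat (val a))) ->
  runs_to (transition (tm_delta q a)) l st o -> runs_to (dispatch ps) l st o.
Proof.
move=> + Hq Ha Hd; elim: ps => [|[q' a'] ps IH] //=; rewrite in_cons => qa_in.
apply: (runs_to_if (b := (val q == val q') && (val a == val a'))).
  by rewrite /ev /= Hq Ha /= !Z_of_nat_eqb.
case: ifP => [/andP [/eqP/val_inj <- /eqP/val_inj <-] //| neq].
apply: IH; case/orP: qa_in => // /eqP [eq_q eq_a].
by rewrite eq_q eq_a !eqxx in neq.
Qed.

Lemma shift_head_runs l st src dst (a : tsym M) S D :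
  [&& src != dst, src != v_head & dst != v_head] ->
  l src = Some (VInt (tape_code S)) -> l dst = Some (VInt (tape_code D)) ->
  exists l', runs_to (shift_head src dst (Z.of_nat (val a))) l st (ONormal l' st) /\
    [/\ l' src = Some (VInt (tape_code (behead S))),
        l' dst = Some (VInt (tape_code (a :: D))),
        l' v_head = Some (VInt (Z.of_nat (val (head (blank M) S)))) &
        agree_off l' l [:: src; dst; v_head]].
Proof.
case/and3P=> /negbTE sd /negbTE sh /negbTE dh Hs Hd.
have [ds hs hd] : [/\ (dst == src) = false, (v_head == src) = false & (v_head == dst) = false].
  by rewrite ![_ == src]eq_sym [v_head == _]eq_sym.
apply: runs_to_seq_exists; first by apply: runs_to_assign; rewrite /ev /= Hd.
case: S Hs => [|x S] Hs.
  eexists; split.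
    apply: (runs_to_if (b := true)); first by rewrite /ev /= upd_locE sd Hs.
    exact: runs_to_assign.
  split; rewrite ?upd_locE ?sd ?sh ?dh ?ds ?hs ?hd ?eqxx ?tape_code_cons //.
  by do 2 (apply: agree_off_upd; last by rewrite !inE eqxx ?orbT).
eexists; split.
  apply: (runs_to_if (b := false)).
    by rewrite /ev /= upd_locE sd Hs tape_code_cons_eqb0.
  apply: runs_to_seq; first by apply: runs_to_assign; rewrite /ev /= upd_locE sd Hs radix_eqb0.
  by apply: runs_to_assign; rewrite /ev /= !upd_locE sh sd Hs /= radix_eqb0.
split; rewrite ?upd_locE ?sd ?sh ?dh ?ds ?hs ?hd ?eqxx
  ?tape_code_div ?tape_code_head ?tape_code_cons //.
by do 3 (apply: agree_off_upd; last by rewrite !inE eqxx ?orbT).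
Qed.

Lemma transition_runs l st c : codes_config l c true ->
  exists l', runs_to (transition (tm_delta (cstate c) (chead c))) l st (ONormal l' st) /\
    match step c with
    | None => codes_config l' c false
    | Some c' => codes_config l' c' true
    end.
Proof.
case: c => q L h R [Hq Hh Hl Hr Hrun]; rewrite /step /=; simpl in *.
case: (tm_delta q h) => [[[q' a'] m]|]; last first.
  by eexists; split; [apply: runs_to_assign | split; rewrite ?upd_locE].
apply: runs_to_seq_exists; first exact: runs_to_assign.
set l1 := upd_loc l v_state _.
have [Hl1 Hr1] : l1 v_left = l v_left /\ l1 v_right = l v_right by rewrite /l1 !upd_locE.
rewrite -{}Hl1 -{}Hr1 in Hl Hr.
case: m => /=.
- have [l2 [E2 [Hl2 Hr2 Hh2 agr2]]] :=
    shift_head_runs (src := v_left) (dst := v_right) st a' isT Hl Hr.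
  exists l2; split=> //; case: L Hl Hl2 Hh2 => [|x L] _ Hl2 Hh2;
    by split=> /=; rewrite ?Hl2 ?Hr2 ?Hh2 // agr2 // /l1 upd_locE.
- have [l2 [E2 [Hr2 Hl2 Hh2 agr2]]] :=
    shift_head_runs (src := v_right) (dst := v_left) st a' isT Hr Hl.
  exists l2; split=> //; case: R Hr Hr2 Hh2 => [|x R] _ Hr2 Hh2;
    by split=> /=; rewrite ?Hl2 ?Hr2 ?Hh2 // agr2 // /l1 upd_locE.
- eexists; split; first exact: runs_to_assign.
  by split; rewrite ?upd_locE.
Qed.

Lemma dispatch_step l st c : codes_config l c true ->
  exists l', runs_to (dispatch state_symbol_pairs) l st (ONormal l' st) /\
    match step c with
    | None => codes_config l' c false
    | Some c' => codes_config l' c' true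
    end.
Proof.
move=> coded; have [l' [E coded']] := transition_runs st coded.
exists l'; split=> //; case: coded => Hq Hh _ _ _.
apply: dispatch_runs Hq Hh E.
by apply/allpairsP; exists (cstate c, chead c); rewrite !mem_enum.
Qed.

Lemma simulate_runs t c cf l st : run_steps t c = Some cf -> codes_config l c true ->
  exists l', runs_to simulate l st (ONormal l' st) /\ codes_config l' cf false.
Proof.
move=> halts coded.
pose P n l := (n = 0 /\ codes_config l cf false) \/
              (exists k c, n = k.+1 /\ codes_config l c true /\ run_steps k c = Some cf).
apply: (@runs_to_while _ _ _ _ _ _ st P (fun l => codes_config l cf false)); last first.
  by right; exists t, c.
move=> n l0 [[_ H]|[k [c0 [-> [H Hk]]]]].
  by left; split=> //; case: H => _ _ _ _ Hrun; rewrite /ev /= Hrun.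
right; split; first by case: H => _ _ _ _ Hrun; rewrite /ev /= Hrun.
have [l' [E H']] := dispatch_step st H.
move: Hk H'; rewrite run_steps_unfold; case: (step c0) => [c'|] Hk H'.
- case: k Hk => [|k] // Hk.
  exists k.+1, l'; do 2 split=> //; right; by exists k, c'.
- case: Hk => eq_c; subst c0; exists 0, l'; do 2 split=> //; by left.
Qed.

End Simulator.

Lemma pos_xO_mod2 q : (Z.pos (xO q) mod 2 = 0)%Z.
Proof. by rewrite Pos2Z.inj_xO -(Z.mod_unique_pos _ _ (Z.pos q) 0); lia. Qed.
Lemma pos_xO_div2 q : (Z.pos (xO q) / 2 = Z.pos q)%Z.
Proof. by rewrite Pos2Z.inj_xO -(Z.div_unique_pos _ _ (Z.pos q) 0); lia. Qed.
Lemma pos_xI_mod2 q : (Z.pos (xI q) mod 2 = 1)%Z.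
Proof. by rewrite Pos2Z.inj_xI -(Z.mod_unique_pos _ _ (Z.pos q) 1); lia. Qed.
Lemma pos_xI_div2 q : (Z.pos (xI q) / 2 = Z.pos q)%Z.
Proof. by rewrite Pos2Z.inj_xI -(Z.div_unique_pos _ _ (Z.pos q) 1); lia. Qed.

#[local] Arguments Z.add : simpl never.
#[local] Arguments Z.mul : simpl never.
#[local] Arguments Z.sub : simpl never.
#[local] Arguments Z.modulo : simpl never.
#[local] Arguments Z.div : simpl never.

Section Accumulators.
Variable M : TM.
Variables (Lint : seq interface) (inp : seq bool) (nd : system) (addr : seq nat).
Local Notation runs_to := (runs_to Lint inp nd addr).
Local Notation ev := (ev Lint inp nd addr).
Local Notation K := (radix M).
Local Notation bits_code := (bits_code M).
Local Notation bits_scale := (bits_scale M).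

Definition holds_bits (l : locals) va vm s :=
  l va = Some (VInt (bits_code s)) /\ l vm = Some (VInt (bits_scale s)).

Definition append_code va vm ea em :=
  SSeq (SAssign va (EBin OAdd (EVar va) (EBin OMul (EVar vm) ea)))
       (SAssign vm (EBin OMul (EVar vm) em)).

Definition append_bits va vm (s : seq bool) :=
  append_code va vm (EInt (bits_code s)) (EInt (bits_scale s)).

Lemma append_code_runs l st va vm ea em s s' : va != vm -> holds_bits l va vm s ->
  ev l st ea = Some (VInt (bits_code s')) ->
  ev (upd_loc l va (VInt (bits_code (s ++ s')))) st em = Some (VInt (bits_scale s')) ->
  runs_to (append_code va vm ea em) l st
    (ONormal (upd_loc (upd_loc l va (VInt (bits_code (s ++ s')))) vm
                      (VInt (bits_scale (s ++ s')))) st).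
Proof.
move=> neq [Ha Hm] Hea Hem.
apply: (runs_to_seq (l1 := upd_loc l va (VInt (bits_code (s ++ s'))))).
  by apply: runs_to_assign; rewrite /ev /= Ha Hm -/(ev l st ea) Hea bits_code_cat.
apply: runs_to_assign; rewrite /ev /= -/(ev _ st em) Hem upd_locE.
by rewrite eq_sym (negbTE neq) Hm bits_scale_cat.
Qed.

Lemma append_bits_runs l st va vm s s' : va != vm -> holds_bits l va vm s ->
  runs_to (append_bits va vm s') l st
    (ONormal (upd_loc (upd_loc l va (VInt (bits_code (s ++ s')))) vm
                      (VInt (bits_scale (s ++ s')))) st).
Proof. by move=> neq Hs; apply: append_code_runs. Qed.

(* Appends [enc_pos p] without its final [false], for [p] in [v_num]: each
   iteration consumes the last binary digit [b] of [p] and appends the two bits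
   [true; b], whose code is [3 + K * (b + 2)]. *)
Definition append_pos_step :=
  SSeq (SAssign v_bit (EBin OMod (EVar v_num) (EInt 2)))
  (SSeq (append_code v_prog v_prog_scale
           (EBin OAdd (EInt 3) (EBin OMul (EInt K) (EBin OAdd (EVar v_bit) (EInt 2))))
           (EInt (K * K)))
        (SAssign v_num (EBin ODiv (EVar v_num) (EInt 2)))).

Definition append_pos_loop := SWhile (EBin OLt (EInt 1) (EVar v_num)) append_pos_step.

Lemma bits_scale_pair b1 b2 : bits_scale [:: b1; b2] = (K * K)%Z.
Proof. by rewrite !bits_scale_cons /bits_scale /= Z.mul_1_r. Qed.

Lemma append_pos_step_runs l st b q s :
  l v_num = Some (VInt (Z.pos (if b then xI q else xO q))) ->
  holds_bits l v_prog v_prog_scale s ->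
  exists l', runs_to append_pos_step l st (ONormal l' st) /\
    [/\ l' v_num = Some (VInt (Z.pos q)),
        holds_bits l' v_prog v_prog_scale (s ++ [:: true; b]) &
        agree_off l' l [:: v_num; v_bit; v_prog; v_prog_scale]].
Proof.
move=> Hx Hs; eexists; split.
  apply: runs_to_seq; first by apply: runs_to_assign; rewrite /ev /= Hx.
  apply: runs_to_seq.
    apply: (@append_code_runs _ _ _ _ _ _ s [:: true; b]) => //.
    + rewrite /ev /= ?upd_locE /= !bits_code_cons /bits_code /=.
      by case: (b); rewrite ?pos_xI_mod2 ?pos_xO_mod2; do 2 f_equal; lia.
    + by rewrite bits_scale_pair.
  by apply: runs_to_assign; rewrite /ev /= !upd_locE /= Hx.
split; first by rewrite !upd_locE /=; case: (b); rewrite ?pos_xI_div2 ?pos_xO_div2.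
  by split; rewrite !upd_locE.
by do 4 (apply: agree_off_upd => //).
Qed.

Lemma append_pos_loop_runs l0 st p s : l0 v_num = Some (VInt (Z.pos p)) ->
  holds_bits l0 v_prog v_prog_scale s ->
  exists l, runs_to append_pos_loop l0 st (ONormal l st) /\
    (exists s', holds_bits l v_prog v_prog_scale s' /\ s' ++ [:: false] = s ++ enc_pos p) /\
    agree_off l l0 [:: v_num; v_bit; v_prog; v_prog_scale].
Proof.
move=> Hx0 Hs0.
pose P n l := exists p' s', n = Pos.to_nat p' /\ l v_num = Some (VInt (Z.pos p')) /\
   holds_bits l v_prog v_prog_scale s' /\ s' ++ enc_pos p' = s ++ enc_pos p /\
   agree_off l l0 [:: v_num; v_bit; v_prog; v_prog_scale].
apply: (@runs_to_while _ _ _ _ _ _ st P _ _ (Pos.to_nat p) l0); last by exists p, s.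
move=> n l [p' [s' [-> [Hx [Hs [eq_s agr]]]]]].
have continue b q : p' = (if b then xI q else xO q) ->
  ev l st (EBin OLt (EInt 1) (EVar v_num)) = Some (VBool true) /\
  exists m l', m < Pos.to_nat p' /\ runs_to append_pos_step l st (ONormal l' st) /\ P m l'.
  move=> eq_p; subst p'; split; first by rewrite /ev /= Hx; case: (b).
  have [l' [E [Hx' Hs' agr']]] := append_pos_step_runs st Hx Hs.
  exists (Pos.to_nat q), l'; split.
    by case: (b); rewrite ?Pos2Nat.inj_xI ?Pos2Nat.inj_xO; apply/ltP; lia.
  split=> //; exists q, (s' ++ [:: true; b]); do 3 split=> //.
  by split; [rewrite -catA -eq_s; case: (b) | apply: agree_off_trans agr' agr].
case: p' Hx eq_s continue => [q|q|] Hx eq_s continue.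
- by right; apply: (continue true q).
- by right; apply: (continue false q).
- by left; split; [rewrite /ev /= Hx | split=> //; exists s'].
Qed.

(* The digits are nonzero, so [size s] divisions by [K] bring [bits_code s] to [0]. *)
Definition scale_loop := SWhile (EBin OLt (EInt 0) (EVar v_num))
  (SSeq (SAssign v_num (EBin ODiv (EVar v_num) (EInt K)))
        (SAssign v_pow (EBin OMul (EVar v_pow) (EInt K)))).

Lemma scale_loop_runs l0 st s : l0 v_num = Some (VInt (bits_code s)) ->
  l0 v_pow = Some (VInt 1) ->
  exists l, runs_to scale_loop l0 st (ONormal l st) /\ l v_pow = Some (VInt (bits_scale s)) /\
    agree_off l l0 [:: v_num; v_pow].
Proof.
move=> Hx0 Hp0.
pose P n l := exists i, n = size s - i /\ i <= size s /\
   l v_num = Some (VInt (bits_code (drop i s))) /\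
   l v_pow = Some (VInt (K ^ Z.of_nat i)%Z) /\ agree_off l l0 [:: v_num; v_pow].
apply: (@runs_to_while _ _ _ _ _ _ st P _ _ (size s) l0); last by exists 0; rewrite drop0 subn0.
move=> n l [i [-> [Hi [Hx [Hp agr]]]]].
case: (ltnP i (size s)) => Hlt; last first.
  have Hi' : i = size s by apply/eqP; rewrite eqn_leq Hi Hlt.
  rewrite Hi' drop_size in Hx; left; split; first by rewrite /ev /= Hx.
  by rewrite Hp Hi'.
right; split.
  rewrite /ev /= Hx (drop_nth false Hlt); congr (Some (VBool _)).
  by apply/Z.ltb_lt; apply: bits_code_cons_gt0.
exists (size s - i.+1); eexists; split; first by rewrite subnS ltn_predL subn_gt0.
split.
  apply: runs_to_seq; first by apply: runs_to_assign; rewrite /ev /= Hx ?radix_eqb0.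
  by apply: runs_to_assign; rewrite /ev /= ?upd_locE /= Hp.
exists i.+1; do 2 split=> //; split.
  by rewrite !upd_locE /= (drop_nth false Hlt) bits_code_div.
split; last by do 2 apply: agree_off_upd => //.
by rewrite upd_locE eqxx Nat2Z.inj_succ Z.pow_succ_r; [do 2 f_equal; lia | lia].
Qed.

End Accumulators.

Definition self_component (P : stmt) : component :=
  Component 0 [::] [::] [:: FunDef 0 main_fn [::] P].
Definition self_system (P : stmt) : system := SNode (self_component P) None [::].
Definition self_instance (P : stmt) : instance :=
  Instance 0 [:: ([::], 0%Z)] [::] [:: self_component P] (self_component P).

Definition component_prefix : seq bool :=
  enc_nat 0 ++ [:: false; false; true] ++ enc_nat 0 ++ enc_nat 0 ++ [:: false].
Definition inst_prefix : seq bool :=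
  enc_nat 0 ++ enc_seq (enc_pair (enc_seq enc_bool) enc_Z) [:: ([::], 0%Z)] ++
  enc_seq enc_interface [::] ++ [:: true] ++ component_prefix.
Definition inst_middle : seq bool := [:: false; false] ++ component_prefix.
Definition inst_suffix : seq bool := [:: false].

Lemma enc_self_instance P : enc_instance (self_instance P) =
  inst_prefix ++ enc_stmt P ++ inst_middle ++ enc_stmt P ++ inst_suffix.
Proof. by rewrite /enc_instance /= -!catA. Qed.

Definition self_prefix : seq bool :=
  enc_nat 4 ++ enc_nat 1 ++ enc_nat v_self ++ enc_nat 0 ++ [:: true].

Lemma enc_set_self p R :
  enc_stmt (SSeq (SAssign v_self (EInt (Z.pos p))) R) = self_prefix ++ enc_pos p ++ enc_stmt R.
Proof. by []. Qed.

Definition seqs (ss : seq stmt) : stmt := foldr SSeq SSkip ss.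

Section Quine.
Variable M : TM.
Variables (Lint : seq interface) (inp : seq bool) (nd : system) (addr : seq nat).
Local Notation runs_to := (runs_to Lint inp nd addr).
Local Notation ev := (ev Lint inp nd addr).
Local Notation K := (radix M).
Local Notation bits_code := (bits_code M).
Local Notation holds_bits := (holds_bits M).

Definition build_program_code : stmt := seqs [::
  SAssign v_prog (EInt 0); SAssign v_prog_scale (EInt 1);
  append_bits M v_prog v_prog_scale self_prefix;
  SAssign v_num (EVar v_self);
  append_pos_loop M;
  append_bits M v_prog v_prog_scale [:: false];
  SAssign v_num (EVar v_self); SAssign v_pow (EInt 1);
  scale_loop M;
  append_code v_prog v_prog_scale (EVar v_self) (EVar v_pow) ].

Lemma build_program_code_runs l0 st p sR :
  l0 v_self = Some (VInt (Z.pos p)) -> bits_code sR = Z.pos p ->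
  exists l, runs_to build_program_code l0 st (ONormal l st) /\
    holds_bits l v_prog v_prog_scale (self_prefix ++ enc_pos p ++ sR).
Proof.
move=> Hself HsR; rewrite /build_program_code /seqs /=.
apply: runs_to_seq_exists; first exact: runs_to_assign.
apply: runs_to_seq_exists; first exact: runs_to_assign.
apply: runs_to_seq_exists; first by apply: (@append_bits_runs _ _ _ _ _ _ _ _ _ [::]).
apply: runs_to_seq_exists; first by apply: runs_to_assign; rewrite /ev /= !upd_locE /= Hself.
set l1 := upd_loc _ v_num _.
have num1 : l1 v_num = Some (VInt (Z.pos p)) by rewrite /l1 upd_locE.
have acc1 : holds_bits l1 v_prog v_prog_scale self_prefix by split; rewrite /l1 !upd_locE.
have [l2 [E2 [[s' [Hs' eq_s']] agr2]]] := append_pos_loop_runs Lint inp nd addr st num1 acc1.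
have self2 : l2 v_self = Some (VInt (Z.pos p)) by rewrite agr2 // /l1 !upd_locE.
apply: (runs_to_seq_exists E2).
apply: runs_to_seq_exists; first by apply: (@append_bits_runs _ _ _ _ _ _ _ _ _ s').
rewrite {}eq_s'.
apply: runs_to_seq_exists; first by apply: runs_to_assign; rewrite /ev /= !upd_locE /= self2.
apply: runs_to_seq_exists; first exact: runs_to_assign.
set l3 := upd_loc _ v_pow _.
have num3 : l3 v_num = Some (VInt (bits_code sR)) by rewrite /l3 !upd_locE /= HsR.
have pow3 : l3 v_pow = Some (VInt 1) by rewrite /l3 upd_locE.
have [l4 [E4 [Hp4 agr4]]] := scale_loop_runs Lint inp nd addr st num3 pow3.
have self4 : l4 v_self = Some (VInt (Z.pos p)) by rewrite agr4 // /l3 !upd_locE.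
apply: (runs_to_seq_exists E4).
eexists; split.
  apply: runs_to_seq; last exact: runs_to_skip.
  apply: (@append_code_runs _ _ _ _ _ _ _ _ _ _ _ (self_prefix ++ enc_pos p) sR) => //.
  - by split; rewrite agr4 // /l3 !upd_locE.
  - by rewrite /ev /= self4 HsR.
  - by rewrite /ev /= upd_locE /= Hp4.
by split; rewrite !upd_locE -catA.
Qed.

Definition build_instance_code : stmt := seqs [::
  SAssign v_inst (EInt 0); SAssign v_inst_scale (EInt 1);
  append_bits M v_inst v_inst_scale inst_prefix;
  append_code v_inst v_inst_scale (EVar v_prog) (EVar v_prog_scale);
  append_bits M v_inst v_inst_scale inst_middle;
  append_code v_inst v_inst_scale (EVar v_prog) (EVar v_prog_scale);
  append_bits M v_inst v_inst_scale inst_suffix ].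

Lemma build_instance_code_runs l0 st s : holds_bits l0 v_prog v_prog_scale s ->
  exists l, runs_to build_instance_code l0 st (ONormal l st) /\
    l v_inst = Some (VInt (bits_code (inst_prefix ++ s ++ inst_middle ++ s ++ inst_suffix))).
Proof.
move=> [Hs Hscale]; rewrite /build_instance_code /seqs /=.
apply: runs_to_seq_exists; first exact: runs_to_assign.
apply: runs_to_seq_exists; first exact: runs_to_assign.
apply: runs_to_seq_exists; first by apply: (@append_bits_runs _ _ _ _ _ _ _ _ _ [::]).
apply: runs_to_seq_exists.
  apply: (@append_code_runs _ _ _ _ _ _ _ _ _ _ _ inst_prefix s) => //;
    by rewrite /ev /= ?upd_locE /= ?Hs ?Hscale.
apply: runs_to_seq_exists; first by apply: append_bits_runs.
apply: runs_to_seq_exists.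
  apply: (@append_code_runs _ _ _ _ _ _ _ _ _ _ _ ((inst_prefix ++ s) ++ inst_middle) s) => //;
    by rewrite /ev /= ?upd_locE /= ?Hs ?Hscale.
eexists; split.
  apply: runs_to_seq; last exact: runs_to_skip.
  exact: append_bits_runs.
by rewrite upd_locE /= upd_locE /= -!catA.
Qed.

(* The final scanned symbol is the bit [true] iff M's output encodes a system. *)
Definition simulate_and_answer : stmt := seqs [::
  SAssign v_state (EInt 0); SAssign v_left (EInt 0);
  SAssign v_head (EBin OSub (EBin OMod (EVar v_inst) (EInt K)) (EInt 1));
  SAssign v_right (EBin ODiv (EVar v_inst) (EInt K));
  SAssign v_running (EBool true);
  simulate M;
  SIf (EBin OEq (EVar v_head) (EInt 2)) (SOutput (EInt 1)) (SOutput (EInt 0)) ].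

Lemma simulate_and_answer_runs l st b w t c :
  l v_inst = Some (VInt (bits_code (b :: w))) -> run_steps t (init_config M (b :: w)) = Some c ->
  runs_to simulate_and_answer l st (OOutput (if val (chead c) == 2 then 1%Z else 0%Z)).
Proof.
move=> Hinst halts; rewrite /simulate_and_answer /seqs /=.
do 5 (apply: runs_to_seq;
  first by apply: runs_to_assign; rewrite /ev /= ?upd_locE /= ?Hinst ?radix_eqb0).
set l1 := upd_loc _ v_running _.
have coded : codes_config l1 (init_config M (b :: w)) true.
  split; rewrite /l1 ?upd_locE //=.
  - by rewrite -tape_code_bits map_cons tape_code_head.
  - by rewrite -tape_code_bits map_cons tape_code_div.
have [l2 [E2 [_ Hh2 _ _ _]]] := simulate_runs Lint inp nd addr st halts coded.
apply: (runs_to_seq E2); apply: runs_to_seq_output.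
apply: (runs_to_if (b := Z.eqb (Z.of_nat (val (chead c))) (Z.of_nat 2))).
  by rewrite /ev /= Hh2.
by rewrite Z_of_nat_eqb; case: ifP => _; apply: runs_to_output.
Qed.

Definition quine_body : stmt :=
  SSeq build_program_code (SSeq build_instance_code simulate_and_answer).

Lemma quine_body_runs l0 st p sR t c :
  l0 v_self = Some (VInt (Z.pos p)) -> bits_code sR = Z.pos p ->
  let s := self_prefix ++ enc_pos p ++ sR in
  run_steps t (init_config M (inst_prefix ++ s ++ inst_middle ++ s ++ inst_suffix)) = Some c ->
  runs_to quine_body l0 st (OOutput (if val (chead c) == 2 then 1%Z else 0%Z)).
Proof.
move=> Hself HsR s halts.
have [l1 [E1 Hs1]] := build_program_code_runs st Hself HsR.
have [l2 [E2 Hinst2]] := build_instance_code_runs st Hs1.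
apply: (runs_to_seq E1); apply: (runs_to_seq E2).
by move: Hinst2 halts; rewrite /inst_prefix; apply: simulate_and_answer_runs.
Qed.

End Quine.

(* The code of [quine_body M] does not depend on [quine_code M], so it can be
   stored in front of it; from it [quine_body M] rebuilds all of [quine M]. *)
Definition quine_code (M : TM) : Z := bits_code M (enc_stmt (quine_body M)).
Definition quine (M : TM) : stmt :=
  SSeq (SAssign v_self (EInt (quine_code M))) (quine_body M).

Lemma quine_code_gt0 M : (0 < quine_code M)%Z.
Proof. exact: bits_code_cons_gt0. Qed.

Lemma quine_runs M Lint inp nd addr t c :
  run_steps t (init_config M (enc_instance (self_instance (quine M)))) = Some c ->
  runs_to Lint inp nd addr (quine M) empty_locals empty_store
    (OOutput (if val (chead c) == 2 then 1%Z else 0%Z)).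
Proof.
move=> halts; have code_pos := Z2Pos.id _ (quine_code_gt0 M).
set p := Z.to_pos _ in code_pos.
rewrite enc_self_instance /quine -code_pos enc_set_self in halts.
rewrite /quine -code_pos.
apply: runs_to_seq; first exact: runs_to_assign.
by apply: (quine_body_runs _ _ _ _ _ _ _ halts); rewrite ?upd_locE code_pos.
Qed.

Lemma valid_self_system P sys :
  valid_system [:: self_component P] (self_component P) sys <-> sys = self_system P.
Proof.
split=> [[ch [-> valid]]|->].
  by case: ch valid => // x ch valid; inversion valid.
by exists [::]; split=> //; constructor=> //=; left.
Qed.

Lemma outputs_self_system P z :
  outputs [::] (self_system P) [::] z <->
  runs_to [::] [::] (self_system P) [::] P empty_locals empty_store (OOutput z).
Proof. by split=> [[f E] | [_ [f E]]]; [split=> //; exists f | exists f]. Qed.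

Lemma self_instance_valid P : valid_instance (self_instance P).
Proof.
split; first by move=> p /= [<-|[]].
split; first by split=> //; split=> [k /= [<-|[]] n []|k _ I []].
by split; [left | exists (FunDef 0 main_fn [::] P); split=> //; left].
Qed.

(* [self_system P] is the only valid system, and it is working iff [P] outputs [0]. *)
Lemma ESCreate_correct_self_instance Rew P a : ESCreate_correct Rew (self_instance P) a ->
  (isSome a <-> runs_to [::] [::] (self_system P) [::] P empty_locals empty_store (OOutput 0)).
Proof.
rewrite /ESCreate_correct /=; case: a => [sys [[/valid_self_system -> working] _]|none].
  by split=> // _; apply/outputs_self_system/(working ([::], 0%Z)); left.
split=> // out0; case: none; exists (self_system P); split; first exact/valid_self_system.
by move=> _ [<-|[]]; apply/outputs_self_system.
Qed.

Lemma enc_answer_head M (c : config M) a : tm_output c = enc_answer a ->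
  (val (chead c) == 2) = isSome a.
Proof.
rewrite /tm_output /=.
have [-> | _] := eqVneq (val (chead c)) 1; first by case: a.
by case: eqP; case: a.
Qed.

Theorem mainTheorem1 (Rew : system -> nat) (Env : system -> seq nat) :
  (forall sys, 0 < Rew sys) ->
  poly_time_computable enc_system enc_nat Rew ->
  poly_time_computable enc_system (enc_seq enc_nat) Env ->
  ~ exists M : TM, solves_ESCreate Rew M.
Proof.
(* No property of [Rew] or [Env] is needed: the diagonal instance below has at
   most one valid system, so the reward never has to be compared. *)
move=> _ _ _ [M solves].
have [a [correct [t [c [halts out]]]]] := solves _ (self_instance_valid (quine M)).
have diag := quine_runs [::] [::] (self_system (quine M)) [::] halts.
move: (ESCreate_correct_self_instance correct); rewrite -(enc_answer_head out).
case: (val (chead c) == 2) diag => diag [some_outputs0 outputs0_some].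
  by have := runs_to_det diag (some_outputs0 erefl).
by have := outputs0_some diag.
Qed.
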